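(* Consider the partial-block protocol described in the context, on a finite set of agents $A$ with a connected undirected connectivity graph $G=(A,E)$, and suppose the block length satisfies $L\le |A|$. Then a deadlock never occurs: for every epoch $t$ it is not the case that $D(i)$ holds for all $i\in A$.
   Context: Let $A$ be a finite set of agents (agent IDs) and $G=(A,E)$ a connected undirected graph; $\Gamma_i$ denotes the set of neighbors of $i$. Fix an integer $L\ge 1$ (block length). Each agent $i$ maintains a partial block $pb_i\subseteq A$ (a set of agent IDs). The system runs in epochs $t=0,1,2,\dots$; $pb_i^{(t)}$ is agent $i$'s partial block at the start of epoch $t$. In each epoch: (C1) every agent $i$ with $i\notin pb_i$ adds $i$ to $pb_i$; (C2) every agent $i$ sends its $pb_i$ to every neighbor $j\in\Gamma_i$. When an agent $i$ receives a partial block $P$ (from a neighbor or via a direct message) it applies the rule: (R1) if $|P\setminus\{i\}|>|pb_i\setminus\{i\}|$, agent $i$ sets $pb_i:=P$; (R2) otherwise, if $|P\setminus\{i\}|=|pb_i\setminus\{i\}|$ and $P\neq pb_i$, agent $i$ sends its current $pb_i$ directly to every agent in $P\setminus pb_i$, each of which processes it by the same rule; (R3) otherwise the received block is discarded. All received partial blocks are assumed to pass all validity and similarity checks. For an agent $i$ and epoch $t$, the predicate $D(i)$ means: $pb_i^{(t)}=pb_i^{(t+1)}$ and $|pb_i^{(t)}|<L$. A deadlock at epoch $t$ means that $D(i)$ holds for all $i\in A$. *)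

From mathcomp Require Import all_boot all_order.
Set Implicit Arguments. Unset Strict Implicit. Unset Printing Implicit Defensive.

Section Protocol.
Variable A : finType.
Variable E : rel A.

Definition neighbors (i : A) : {set A} := [set j | E i j].

(* global state: partial block pb_i of every agent i *)
Definition state := A -> {set A}.

(* a message: (recipient, partial block carried) *)
Definition msg := (A * {set A})%type.

Definition upd (s : state) (i : A) (P : {set A}) : state :=
  fun j => if j == i then P else s j.

(* Agent i receives partial block P in state s: rules R1/R2/R3.
   Returns the new state and the direct messages sent (R2). *)
Definition receive (s : state) (i : A) (P : {set A}) : state * seq msg :=
  if #|s i :\ i| < #|P :\ i| then (upd s i P, [::])
  else if (#|P :\ i| == #|s i :\ i|) && (P != s i)
       then (s, [seq (k, s i) | k <- enum (P :\: s i)])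
       else (s, [::]).

(* One delivery: any pending message (in arbitrary order) is processed;
   the direct messages it triggers are added to the pending pool. *)
Inductive deliver : state * seq msg -> state * seq msg -> Prop :=
| Deliver s l1 l2 i P :
    deliver (s, l1 ++ (i, P) :: l2)
            ((receive s i P).1, l1 ++ l2 ++ (receive s i P).2).

Inductive deliver_star : state * seq msg -> state * seq msg -> Prop :=
| DS_refl c : deliver_star c c
| DS_step c1 c2 c3 : deliver c1 c2 -> deliver_star c2 c3 -> deliver_star c1 c3.

(* State after (C1): every agent adds itself to its partial block. *)
Definition after_C1 (s : state) : state := fun i => i |: s i.

(* Messages sent in (C2): every agent sends its pb to every neighbour. *)
Definition C2_msgs (s : state) : seq msg :=
  [seq (j, s i) | i <- enum A, j <- enum (neighbors i)].

(* One epoch leads from state s (start of epoch t) to s' (start of epoch t+1):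
   (C1), then (C2), then all messages (incl. direct ones) are processed, in
   any order, until none is pending. *)
Definition epoch (s s' : state) : Prop :=
  deliver_star (after_C1 s, C2_msgs (after_C1 s)) (s', [::]).

Definition Dpred (L : nat) (pb : nat -> state) (t : nat) (i : A) : Prop :=
  pb t i = pb t.+1 i /\ #|pb t i| < L.

Definition deadlock (L : nat) (pb : nat -> state) (t : nat) : Prop :=
  forall i : A, Dpred L pb t i.

End Protocol.

(* The number |pb_i \ {i}| of foreign agents in a block never decreases while
   messages are processed.  In a deadlocked epoch it therefore never grows, so
   no message is ever adopted by R1: the epoch ends in the state reached after
   C1, and every C2 message, as well as every R2 reply it provokes, fails the
   R1 test in that state.  Let i0 hold a largest block and pb_j = pb_i0.  A
   neighbour k of j lies in pb_j (otherwise pb_j beats pb_k), hence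
   |pb_k| = |pb_j|; if pb_k <> pb_j, then k sends pb_k by R2 to some
   l in pb_j \ pb_k, and pb_k would beat pb_l.  By connectivity every block
   equals pb_i0, which thus contains every agent, so |pb_i| = |A| >= L. *)

From mathcomp Require Import all_boot all_order.
From mathcomp Require Import zify.

Set Implicit Arguments.
Unset Strict Implicit.
Unset Printing Implicit Defensive.

Section Protocol.
Variable A : finType.

Definition rank (s : state A) (i : A) : nat := #|s i :\ i|.

Definition harmless (s : state A) (m : msg A) : bool := #|m.2 :\ m.1| <= rank s m.1.

Lemma receive_harmless (s : state A) i P :
  harmless s (i, P) -> (receive s i P).1 = s.
Proof. by rewrite /harmless leqNgt /receive => /negbTE ->; case: ifP. Qed.

Lemma rank_receive_adopt (s : state A) i P :
  ~~ harmless s (i, P) -> rank s i < rank (receive s i P).1 i.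
Proof. by rewrite /harmless -ltnNge /receive => lt_sP; rewrite lt_sP /= /rank /upd eqxx. Qed.

Lemma rank_receive (s : state A) i P j : rank s j <= rank (receive s i P).1 j.
Proof.
rewrite /receive; case: ifP => [lt_sP|_] /=; last by case: ifP.
by rewrite /rank /upd; case: eqP => [->|//]; exact: ltnW.
Qed.

Lemma rank_deliver_star (c c' : state A * seq (msg A)) :
  deliver_star c c' -> forall j, rank c.1 j <= rank c'.1 j.
Proof.
elim=> [//|c1 c2 c3 step _ IH] j; apply: leq_trans (IH j).
by case: step => s l1 l2 i P; exact: rank_receive.
Qed.

Lemma deliver_star_quiescent (c c' : state A * seq (msg A)) :
  deliver_star c c' -> c'.2 = [::] -> (forall j, rank c'.1 j <= rank c.1 j) ->
  c'.1 =1 c.1 /\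
  {in c.2, forall m, harmless c.1 m /\
                     {in (receive c.1 m.1 m.2).2, forall m', harmless c.1 m'}}.
Proof.
elim=> [[s l] /= -> _ | c1 c2 c3 step run IH nil3 le3]; first by split.
case: step run IH le3 => s l1 l2 i P run IH le3 /=.
have mono := rank_deliver_star run.
have harm_iP : harmless s (i, P).
  apply: contraT => /rank_receive_adopt.
  by rewrite ltnNge (leq_trans (mono i) (le3 i)).
rewrite /= receive_harmless // in IH; have [eq3 inv] := IH nil3 le3.
split=> // m; rewrite mem_cat inE => /or3P [m_l1 | /eqP -> | m_l2].
- by apply: inv; rewrite mem_cat m_l1.
- split=> // m' m'_out; apply: (inv m' _).1.
  by rewrite !mem_cat m'_out !orbT.
- by apply: inv; rewrite !mem_cat m_l2 orbT.
Qed.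

Section Quiescent.
Variables (E : rel A) (S : state A).
Hypothesis S_self : forall j, j \in S j.
Hypothesis edge_harmless : forall j k, E j k ->
  harmless S (k, S j) /\ {in (receive S k (S j)).2, forall m, harmless S m}.

Lemma rank_self j : rank S j = #|S j|.-1.
Proof. by rewrite /rank (cardsD1 j (S j)) S_self. Qed.

Lemma max_block_spread i0 j k :
  (forall l, #|S l| <= #|S i0|) -> S j = S i0 -> E j k -> S k = S i0.
Proof.
move=> i0_max Sj jk; have [harm_jk harm_out] := edge_harmless jk.
have card_pos l : 0 < #|S l| by apply/card_gt0P; exists l.
have card_jk := cardsD1 k (S j).
move: harm_jk; rewrite /harmless /= rank_self => harm_jk.
have k_in : k \in S j.
  apply: contraT => /negbTE k_out.
  by move: card_jk harm_jk (i0_max k) (card_pos i0); rewrite k_out Sj; lia.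
have card_k : #|S k| = #|S i0|.
  by move: card_jk harm_jk (i0_max k) (card_pos k); rewrite k_in Sj; lia.
rewrite -Sj; apply/eqP; apply: contraT => neq.
have [l l_in] : exists l, l \in S j :\: S k.
  apply/set0Pn; rewrite setD_eq0; apply: contra neq => sub.
  by rewrite eq_sym eqEcard sub card_k Sj leqnn.
have l_msg : (l, S k) \in (receive S k (S j)).2.
  have eq_rank : #|S j :\ k| = #|S k :\ k|.
    by move: card_jk; rewrite -/(rank S k) rank_self k_in card_k Sj; lia.
  rewrite /receive eq_rank ltnn eqxx eq_sym neq /=.
  by apply/mapP; exists l; rewrite ?mem_enum.
move: l_in; rewrite inE => /andP [/negbTE l_out _].
have := harm_out _ l_msg; rewrite /harmless /= rank_self.
by move: (cardsD1 l (S k)) (i0_max l) (card_pos l); rewrite l_out; lia.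
Qed.

Hypotheses (Esym : symmetric E) (Econn : forall i j, connect E i j).

Lemma quiescent_blocks_full j : S j = [set: A].
Proof.
have [i0 _ i0_max] := @arg_maxnP A j predT (fun i => #|S i|) isT.
have {}i0_max l : #|S l| <= #|S i0| := i0_max l isT.
have X_closed : closed E [pred k | S k == S i0].
  apply: (intro_closed (sym_connect_sym Esym)) => x y xy; rewrite !inE => /eqP Sx.
  by apply/eqP; exact: max_block_spread i0_max Sx xy.
have S_eq k : S k = S i0.
  by apply/eqP; have := closed_connect X_closed (Econn i0 k); rewrite !inE eqxx.
by rewrite S_eq; apply/setP => k; rewrite inE -(S_eq k) S_self.
Qed.

End Quiescent.

Lemma C2_msgs_edge (E : rel A) (s : state A) i j : E i j -> (j, s i) \in C2_msgs E s.
Proof. by move=> ij; apply/allpairsPdep; exists i, j; rewrite mem_enum inE mem_enum inE. Qed.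

Lemma rank_after_C1 (s : state A) j : rank (after_C1 s) j = rank s j.
Proof. by rewrite /rank /after_C1 setDUl setDv set0U. Qed.

Lemma epoch_without_growth_full (E : rel A) (s s' : state A) :
  symmetric E -> (forall i j, connect E i j) ->
  epoch E s s' -> (forall j, rank s' j <= rank s j) -> forall j, s' j = [set: A].
Proof.
move=> Esym Econn ep no_growth.
have no_growth_C1 j : rank s' j <= rank (after_C1 s) j by rewrite rank_after_C1.
have [/= s'_eq inv] := deliver_star_quiescent ep erefl no_growth_C1.
move=> j; rewrite s'_eq; apply: quiescent_blocks_full => // [k|i k ik].
  by rewrite /after_C1 setU11.
exact: inv _ (C2_msgs_edge _ ik).
Qed.

End Protocol.

Theorem corollary1 (A : finType) (E : rel A) (L : nat)
  (Esym : symmetric E) (Eirr : irreflexive E)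
  (Econn : forall i j : A, connect E i j)
  (L_ge1 : 1 <= L) (L_le : L <= #|A|)
  (pb : nat -> state A) (t : nat)
  (run : forall u : nat, u <= t -> epoch E (pb u) (pb u.+1)) :
  ~ deadlock L pb t.
Proof.
move=> dl; have /card_gt0P [a _] : 0 < #|A| := leq_trans L_ge1 L_le.
have no_growth j : rank (pb t.+1) j <= rank (pb t) j by rewrite /rank (dl j).1.
have full := epoch_without_growth_full Esym Econn (run t (leqnn t)) no_growth.
by have := (dl a).2; rewrite (dl a).1 full cardsT ltnNge L_le.
Qed.
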